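(* In the nonatomic base station association game with cost densities $c_{lj}(\mathbf{m})=g_{lj}c(m_j)$, suppose $h_{lj}=h$ for all $l\in\mathcal{L}$, $j\in\mathcal{N}$ (for a constant $h>0$). Then every Nash equilibrium is system optimal, i.e., minimizes $C(\mathbf{m})=\sum_{j\in\mathcal{N}}\sum_{l=1}^L m_{lj}g_{lj}c(m_j)$ over all congestion profiles.
   Context: Nonatomic model: classes $\mathcal{L}=\{1,\dots,L\}$ of nonatomic mobiles, class $l$ having total mass $M_l>0$, target SINR density $\gamma_l>0$ and power gain $h_{lj}>0$ to BS $j\in\mathcal{N}=\{1,\dots,N\}$; noise power $\sigma^2>0$. A congestion profile is $\mathbf{m}=(m_{lj})$ with $m_{lj}\ge0$, $\sum_j m_{lj}=M_l$. Set $m_j=\sum_l\gamma_l m_{lj}$, $g_{lj}=\gamma_l\sigma^2/h_{lj}$, and $c(z)=1/(1-z)$ for $z<1$, $c(z)=\infty$ for $z\ge1$; $c_{lj}(\mathbf{m})=g_{lj}c(m_j)$. $\mathbf{m}$ is a Nash equilibrium if for all $l,j$, $m_{lj}>0$ implies $c_{lj}(\mathbf{m})\le c_{lk}(\mathbf{m})$ for all $k$. Standing feasibility assumption: $\sum_l\gamma_l M_l<N$. *)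

From HB Require Import structures.
From mathcomp Require Import all_boot all_order all_algebra.
From mathcomp Require Import reals constructive_ereal.
Set Implicit Arguments. Unset Strict Implicit. Unset Printing Implicit Defensive.
Import Order.TTheory GRing.Theory Num.Theory.
Local Open Scope ring_scope.
Local Open Scope ereal_scope.

(* Nonatomic base station association game.
   Classes are 'I_L, base stations are 'I_N. *)
Section BSGame.
Variables (R : realType) (L N : nat).

Definition ccost (z : R) : \bar R :=
  if (z < 1)%R then ((1 - z)^-1)%:E else +oo.

Definition is_profile (M : 'I_L -> R) (m : 'I_L -> 'I_N -> R) : Prop :=
  (forall l j, (0 <= m l j)%R) /\ (forall l, (\sum_(j < N) m l j)%R = M l).

Definition load (gamma : 'I_L -> R) (m : 'I_L -> 'I_N -> R) (j : 'I_N) : R :=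
  (\sum_(l < L) gamma l * m l j)%R.

Definition gcoef (gamma : 'I_L -> R) (sigma2 : R) (h : 'I_L -> 'I_N -> R)
  (l : 'I_L) (j : 'I_N) : R := (gamma l * sigma2 / h l j)%R.

Definition cdens gamma sigma2 h (m : 'I_L -> 'I_N -> R) l j : \bar R :=
  (gcoef gamma sigma2 h l j)%:E * ccost (load gamma m j).

Definition is_NE gamma sigma2 h (m : 'I_L -> 'I_N -> R) : Prop :=
  forall l j, (0 < m l j)%R ->
    forall k, cdens gamma sigma2 h m l j <= cdens gamma sigma2 h m l k.

Definition total_cost gamma sigma2 h (m : 'I_L -> 'I_N -> R) : \bar R :=
  \sum_(j < N) \sum_(l < L)
     (m l j * gcoef gamma sigma2 h l j)%:E * ccost (load gamma m j).

End BSGame.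

From HB Require Import structures.
From mathcomp Require Import all_boot all_order all_algebra.
From mathcomp Require Import reals constructive_ereal.
From mathcomp Require Import ring.
Set Implicit Arguments. Unset Strict Implicit. Unset Printing Implicit Defensive.
Import Order.TTheory GRing.Theory Num.Theory.
Local Open Scope ring_scope.

(* With a common gain h0 every density g_lj = (sigma^2/h0) gamma_l, so the total
   cost is (sigma^2/h0) sum_j f(m_j) with f(z) = z c(z), a convex function of
   the loads alone, whose sum sum_j m_j = sum_l gamma_l M_l is fixed.  At a Nash
   equilibrium every loaded base station has minimal c(m_j), hence all loads
   equal the minimal load lam < 1.  Summing the tangent line of f at lam, which
   lies below f, gives a lower bound on sum_j f(m'_j) for any profile m' that is
   attained by the equilibrium. *)

Section CostFunction.
Variable R : realType.

Lemma ccost_lt1 (z : R) : z < 1 -> ccost z = ((1 - z)^-1)%:E.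
Proof. by rewrite /ccost => ->. Qed.

Lemma lee_ccost (x y : R) : y < 1 -> (ccost x <= ccost y)%E = (x <= y).
Proof.
move=> y1; rewrite (ccost_lt1 y1) /ccost.
case: ltP => [x1|y1x].
  by rewrite lee_fin lef_pV2 ?posrE ?subr_gt0 // lerD2l lerN2.
by rewrite leye_eq; apply/esym/negbTE; rewrite -ltNge (lt_le_trans y1).
Qed.

Lemma ccost_ge0 (z : R) : (0 <= ccost z)%E.
Proof. by rewrite /ccost; case: ltP => z1; rewrite ?leey // lee_fin invr_ge0 subr_ge0 ltW. Qed.

Definition ccost_tangent (a z : R) : R := a / (1 - a) + (z - a) / (1 - a) ^+ 2.

Lemma ccost_tangent_id (a : R) : a < 1 -> (ccost_tangent a a)%:E = (a%:E * ccost a)%E.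
Proof. by move=> a1; rewrite ccost_lt1 // -EFinM /ccost_tangent subrr mul0r addr0. Qed.

Lemma ccost_tangent_le (a z : R) : a < 1 -> ((ccost_tangent a z)%:E <= z%:E * ccost z)%E.
Proof.
move=> a1; rewrite /ccost; case: ltP => [z1|z1]; last first.
  by rewrite mulry gtr0_sg ?mul1e ?leey // (lt_le_trans ltr01).
have a1' : 0 < 1 - a by rewrite subr_gt0.
have z1' : 0 < 1 - z by rewrite subr_gt0.
rewrite -EFinM lee_fin -subr_ge0.
have -> : z * (1 - z)^-1 - ccost_tangent a z = (z - a) ^+ 2 / ((1 - a) ^+ 2 * (1 - z)).
  by rewrite /ccost_tangent; field; rewrite !gt_eqF.
by rewrite divr_ge0 ?sqr_ge0 // mulr_ge0 ?sqr_ge0 ?ltW.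
Qed.

Lemma sum_ccost_tangent (n : nat) (a : R) (x y : 'I_n -> R) :
  \sum_(j < n) x j = \sum_(j < n) y j ->
  \sum_(j < n) ccost_tangent a (x j) = \sum_(j < n) ccost_tangent a (y j).
Proof. by move=> xy; rewrite /ccost_tangent !big_split /= -!mulr_suml !sumrB xy. Qed.

Lemma exists_min_lt1 (n : nat) (x : 'I_n -> R) :
  \sum_(j < n) x j < n%:R -> exists2 i, forall j, x i <= x j & x i < 1.
Proof.
case: n x => [|n] x; first by rewrite big_ord0 ltxx.
move=> xn; case: (arg_minP x (isT : predT ord0)) => i _ imin.
exists i => [j|]; first exact: imin.
rewrite -(ltr_pM2l (ltr0n _ n.+1)) mulr1; apply: le_lt_trans xn.
rewrite (_ : _ * x i = \sum_(j < n.+1) x i); last by rewrite sumr_const card_ord mulr_natl.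
by apply: ler_sum => j _; apply: imin.
Qed.

End CostFunction.

Section UniformGain.
Variables (R : realType) (L N : nat) (gamma : 'I_L -> R) (sigma2 h0 : R).
Variable h : 'I_L -> 'I_N -> R.
Hypotheses (gamma_gt0 : forall l, 0 < gamma l) (sigma2_gt0 : 0 < sigma2).
Hypotheses (h0_gt0 : 0 < h0) (hE : forall l j, h l j = h0).

Lemma load_ge0 (m : 'I_L -> 'I_N -> R) j :
  (forall l, 0 <= m l j) -> 0 <= load gamma m j.
Proof. by move=> m0; apply: sumr_ge0 => l _; rewrite mulr_ge0 // ltW. Qed.

Lemma sum_load (M : 'I_L -> R) (m : 'I_L -> 'I_N -> R) :
  is_profile M m -> \sum_(j < N) load gamma m j = \sum_(l < L) gamma l * M l.
Proof.
case=> _ mM; rewrite /load exchange_big /=; apply: eq_bigr => l _.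
by rewrite -mulr_sumr mM.
Qed.

Lemma gcoef_uniform l j : gcoef gamma sigma2 h l j = gamma l * (sigma2 / h0).
Proof. by rewrite /gcoef hE mulrA. Qed.

Lemma total_cost_uniform (m : 'I_L -> 'I_N -> R) :
  (forall l j, 0 <= m l j) ->
  total_cost gamma sigma2 h m =
  ((sigma2 / h0)%:E * \sum_(j < N) (load gamma m j)%:E * ccost (load gamma m j))%E.
Proof.
move=> m0; have k0 : 0 <= sigma2 / h0 by rewrite divr_ge0 ?ltW.
rewrite ge0_sume_distrr => [|j _]; last first.
  by rewrite mule_ge0 ?ccost_ge0 // lee_fin load_ge0.
apply: eq_bigr => j _; rewrite muleA -EFinM -ge0_sume_distrl => [|l _]; last first.
  by rewrite lee_fin gcoef_uniform mulr_ge0 // mulr_ge0 // ltW.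
rewrite sumEFin /load mulr_sumr; congr (_%:E * _)%E; apply: eq_bigr => l _.
by rewrite gcoef_uniform; ring.
Qed.

Lemma load_neq0_user (m : 'I_L -> 'I_N -> R) j :
  (forall l, 0 <= m l j) -> load gamma m j != 0 -> exists l, 0 < m l j.
Proof.
move=> m0 lj0; apply/existsP; move: lj0; apply: contraNT.
rewrite negb_exists => /forallP mj0; apply/eqP/big1 => l _.
by move: (mj0 l); rewrite lt_def m0 andbT negbK => /eqP ->; rewrite mulr0.
Qed.

Lemma NE_equal_loads (M : 'I_L -> R) (m : 'I_L -> 'I_N -> R) i :
  is_profile M m -> is_NE gamma sigma2 h m ->
  (forall j, load gamma m i <= load gamma m j) -> load gamma m i < 1 ->
  forall j, load gamma m j = load gamma m i.
Proof.
move=> [m0 _] NE imin i1 j; apply/eqP; rewrite eq_le imin andbT.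
have [->|/load_neq0_user[//|l mlj]] := eqVneq (load gamma m j) 0.
  exact: load_ge0.
have := NE l j mlj i; rewrite /cdens !gcoef_uniform.
by rewrite lee_pmul2l ?lee_ccost // lte_fin !mulr_gt0 ?invr_gt0.
Qed.

End UniformGain.

Theorem proposition11 (R : realType) (L N : nat)
  (M gamma : 'I_L -> R) (h : 'I_L -> 'I_N -> R) (sigma2 h0 : R) :
  (forall l, 0 < M l) -> (forall l, 0 < gamma l) -> 0 < sigma2 ->
  \sum_(l < L) gamma l * M l < N%:R ->
  0 < h0 -> (forall l j, h l j = h0) ->
  forall m : 'I_L -> 'I_N -> R,
    is_profile M m -> is_NE gamma sigma2 h m ->
    forall m' : 'I_L -> 'I_N -> R, is_profile M m' ->
      (total_cost gamma sigma2 h m <= total_cost gamma sigma2 h m')%E.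
Proof.
move=> _ g0 s0 feas h0p hE m mP NE m' m'P.
have := @exists_min_lt1 _ _ (load gamma m).
rewrite (sum_load gamma mP) => /(_ feas)[i imin i1].
set lam := load gamma m i in imin i1.
rewrite (total_cost_uniform g0 s0 h0p hE (proj1 mP)).
rewrite (total_cost_uniform g0 s0 h0p hE (proj1 m'P)).
rewrite lee_pmul2l ?lte_fin ?divr_gt0 //.
rewrite (eq_bigr (fun j => (ccost_tangent lam (load gamma m j))%:E)) => [|j _]; last first.
  by rewrite (NE_equal_loads g0 s0 h0p hE mP NE imin i1) ccost_tangent_id.
rewrite sumEFin (sum_ccost_tangent _ (x := load gamma m) (y := load gamma m')); last first.
  by rewrite !(sum_load _ mP, sum_load _ m'P).
by rewrite -sumEFin; apply: lee_sum => j _; apply: ccost_tangent_le.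
Qed.
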